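(* Let $f$ be the solution of the radial Loewner PDE $$\frac{\partial f}{\partial t}(z,t)=-z f'(z,t)\,\frac{e^{it}+z}{e^{it}-z},\qquad f(z,0)=z,\quad (z,t)\in\mathbb{D}\times[0,\infty),$$ which is given by $f(z,t)=\phi^{-1}(e^{(i-1)t}\phi(e^{-it}z))$ with $\phi(z)=z(z-i)^{i-1}$ (a univalent function on $\mathbb{D}$). Let $\gamma(t):=f(e^{it},t)$, $t\ge0$, be the trace of the tip point (the boundary value of $f(\cdot,t)$ at $e^{it}$, equivalently $\gamma(t)=\phi^{-1}(e^{(i-1)t}\phi(1))$), and write $\gamma(t)=r(t)e^{i\Theta(t)}$ with $\Theta$ continuous and $\Theta(0)=0$. Then $r$ is decreasing with $r(t)\to0$ as $t\to\infty$, and $\Theta$ is increasing (with $\Theta'(t)>0$ for $t>0$) and $\Theta(t)\to\infty$ as $t\to\infty$; i.e. $\gamma$ spirals about the origin.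
   Context: $\mathbb{D}$ is the unit disc; $f'$ denotes $\partial f/\partial z$. The power $(z-i)^{i-1}$ is defined via a holomorphic branch of $\log(z-i)$ on $\mathbb{D}$. *)

From Stdlib Require Import Reals.
From Coquelicot Require Import Coquelicot.
Open Scope R_scope.

Definition Cexp (z : C) : C :=
  (exp (Re z) * cos (Im z), exp (Re z) * sin (Im z)).

(* principal argument, in (-PI, PI] (for z <> 0) *)
Definition Arg (z : C) : R :=
  if Rle_dec 0 (Im z) then acos (Re z / Cmod z) else - acos (Re z / Cmod z).

Definition Clog (z : C) : C := (ln (Cmod z), Arg z).

(* phi(z) = z (z - i)^(i-1), with the principal branch of log(z - i),
   which is holomorphic on the unit disc (z - i lies in the lower half plane)
   and also at z = 1. *)
Definition phi (z : C) : C :=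
  Cmult z (Cexp (Cmult (Cminus Ci 1) (Clog (Cminus z Ci)))).

(* the defining properties of the tip trace gamma(t) = phi^{-1}(e^{(i-1)t} phi(1))
   and of a continuous argument Theta with Theta(0) = 0 *)
Definition tip_trace (gamma : R -> C) (Theta : R -> R) : Prop :=
  gamma 0 = RtoC 1 /\
  (forall t, 0 < t -> Cmod (gamma t) < 1) /\
  (forall t, 0 <= t ->
     phi (gamma t) = Cmult (Cexp (Cmult (Cminus Ci 1) (RtoC t))) (phi (RtoC 1))) /\
  (forall t, 0 <= t ->
     filterlim Theta (within (fun s => 0 <= s) (locally t)) (locally (Theta t))) /\
  Theta 0 = 0 /\
  (forall t, 0 <= t ->
     gamma t = Cmult (RtoC (Cmod (gamma t))) (Cexp (Cmult Ci (RtoC (Theta t))))).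

From Stdlib Require Import Reals Lra Lia ClassicalEpsilon.
From Coquelicot Require Import Coquelicot.
Open Scope R_scope.

(* Write z = e^(r + i theta).  Then phi z = e^(u + i v) with u = r - L - A and
   v = theta + L - A, where L = ln |z - i| and A = Arg (z - i) + PI / 2, so the tip
   equation phi (gamma tau) = e^((i - 1) tau) phi 1 splits into an equation
   defect r theta = 0 not involving tau (it says u + v = const) and clock r theta = tau
   (it says v - u = 2 tau + const).  For r < 0, defect r is strictly increasing, so its
   zero set is the graph theta = curve_angle r; along it the clock decreases from +oo to 0
   as r runs from -oo to 0, hence gamma tau = e^(rho + i curve_angle rho) where
   rho = log_radius tau inverts the clock.  Implicit differentiation gives
   curve_angle' = - defect_r / defect_t and log_radius' < 0; the spiralling comes from
   defect_r > 0 on the curve and from the bound curve_angle r > - r - 3 PI / 2. *)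

(** * Real analysis *)

Lemma locally_pos_of_continuous {U : UniformSpace} (f : U -> R) x :
  continuous f x -> 0 < f x -> locally x (fun u => 0 < f u).
Proof.
  intros Hf Hpos.
  apply (filterlim_locally f (f x)) with (eps := mkposreal _ Hpos) in Hf.
  revert Hf. apply filter_imp. intros u Hu.
  change (Rabs (f u - f x) < f x) in Hu. apply Rabs_def2 in Hu. lra.
Qed.

Lemma continuous_implicit_zero (F : R -> R -> R) (D : R -> Prop) (g : R -> R) r :
  locally r (fun u => D (g u) /\ F u (g u) = 0 /\
    forall s t, D s -> D t -> s < t -> F u s < F u t) ->
  locally (g r) D ->
  (forall t, D t -> continuous (fun u => F u t) r) ->
  continuous g r.
Proof.
  intros Hg [e0 HD] HF. apply filterlim_locally. intros eps.
  set (e := Rmin eps e0 / 2).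
  assert (He : 0 < e) by (apply Rdiv_lt_0_compat; [apply Rmin_pos; apply cond_pos|lra]).
  assert (Hee : e < eps /\ e < e0).
  { pose proof (Rmin_l eps e0). pose proof (Rmin_r eps e0).
    pose proof (cond_pos eps). pose proof (cond_pos e0). unfold e. lra. }
  assert (Dlo : D (g r - e)) by (apply HD; change (Rabs (g r - e - g r) < e0);
                                   rewrite Rabs_left; lra).
  assert (Dhi : D (g r + e)) by (apply HD; change (Rabs (g r + e - g r) < e0);
                                   rewrite Rabs_right; lra).
  destruct (locally_singleton _ _ Hg) as [Dr [Hr Hmono]].
  assert (Hhi : locally r (fun u => 0 < F u (g r + e))).
  { apply locally_pos_of_continuous; [now apply HF|].
    rewrite <- Hr. apply Hmono; auto; lra. }
  assert (Hlo : locally r (fun u => 0 < - F u (g r - e))).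
  { apply locally_pos_of_continuous.
    - apply (continuous_opp (fun u => F u (g r - e))). now apply HF.
    - rewrite <- Ropp_0, <- Hr. apply Ropp_lt_contravar, Hmono; auto; lra. }
  generalize (filter_and _ _ Hg (filter_and _ _ Hhi Hlo)).
  apply filter_imp. intros u [[Du [Hu Hmu]] [H1 H2]].
  change (Rabs (g u - g r) < eps). apply Rabs_def1.
  - destruct (Rlt_le_dec (g u) (g r + e)) as [|Hle]; [lra|exfalso].
    destruct (Req_dec (g u) (g r + e)) as [Heq|Hne]; [rewrite Heq in Hu; lra|].
    pose proof (Hmu (g r + e) (g u) Dhi Du ltac:(lra)). lra.
  - destruct (Rlt_le_dec (g r - e) (g u)) as [|Hle]; [lra|exfalso].
    destruct (Req_dec (g u) (g r - e)) as [Heq|Hne]; [rewrite Heq in Hu; lra|].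
    pose proof (Hmu (g u) (g r - e) Du Dlo ltac:(lra)). lra.
Qed.

Lemma implicit_quotient_estimate a b h D e : b <> 0 -> h <> 0 -> 0 <= e <= Rabs b / 2 ->
  Rabs (a * h + b * D) <= e * Rmax (Rabs h) (Rabs D) ->
  Rabs (D / h + a / b) <= e * (2 + 2 * Rabs a / Rabs b) / Rabs b.
Proof.
  intros Hb Hh He Hlin.
  assert (Hbp : 0 < Rabs b) by now apply Rabs_pos_lt.
  assert (Hhp : 0 < Rabs h) by now apply Rabs_pos_lt.
  pose proof (Rabs_pos a). pose proof (Rabs_pos D).
  assert (HM : Rmax (Rabs h) (Rabs D) <= Rabs h + Rabs D) by (apply Rmax_lub; lra).
  assert (HbD : Rabs b * Rabs D <= Rabs (a * h + b * D) + Rabs a * Rabs h).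
  { pose proof (Rabs_triang (a * h + b * D) (- (a * h))) as Htri.
    rewrite Rabs_Ropp, Rabs_mult in Htri. rewrite <- Rabs_mult.
    eapply Rle_trans; [|exact Htri]. right. f_equal. ring. }
  assert (HDh : Rabs D <= (1 + 2 * Rabs a / Rabs b) * Rabs h).
  { apply (Rmult_le_reg_l (Rabs b / 2)); [lra|].
    replace (Rabs b / 2 * ((1 + 2 * Rabs a / Rabs b) * Rabs h))
      with (Rabs b / 2 * Rabs h + Rabs a * Rabs h) by (field; lra).
    nra. }
  replace (D / h + a / b) with ((a * h + b * D) / (b * h)) by (field; auto).
  rewrite Rabs_div, Rabs_mult by (apply Rmult_integral_contrapositive; auto).
  apply (Rmult_le_reg_r (Rabs b * Rabs h)); [nra|].
  replace (Rabs (a * h + b * D) / (Rabs b * Rabs h) * (Rabs b * Rabs h))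
    with (Rabs (a * h + b * D)) by (field; split; lra).
  replace (e * (2 + 2 * Rabs a / Rabs b) / Rabs b * (Rabs b * Rabs h))
    with (e * ((2 + 2 * Rabs a / Rabs b) * Rabs h)) by (field; lra).
  eapply Rle_trans; [exact Hlin|]. apply Rmult_le_compat_l; lra.
Qed.

Lemma derivable_pt_lim_implicit (F : R -> R -> R) (g : R -> R) r a b :
  differentiable_pt_lim F r (g r) a b -> b <> 0 -> continuous g r ->
  locally r (fun u => F u (g u) = F r (g r)) ->
  derivable_pt_lim g r (- a / b).
Proof.
  intros HF Hb Hg Hlev eps Heps.
  assert (Hbp : 0 < Rabs b) by now apply Rabs_pos_lt.
  set (K := (2 + 2 * Rabs a / Rabs b) / Rabs b).
  assert (HK : 0 < K).
  { unfold K. pose proof (Rabs_pos a).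
    assert (0 <= Rabs a / Rabs b) by (apply Rdiv_le_0_compat; lra).
    apply Rdiv_lt_0_compat; lra. }
  set (e := Rmin (Rabs b / 2) (eps / (2 * K))).
  assert (He : 0 < e) by (apply Rmin_pos; [lra|apply Rdiv_lt_0_compat; lra]).
  assert (HeK : e * K < eps).
  { assert (e <= eps / (2 * K)) by apply Rmin_r.
    apply (Rmult_le_compat_r K) in H; [|lra].
    replace (eps / (2 * K) * K) with (eps / 2) in H by (field; lra). lra. }
  destruct (HF (mkposreal e He)) as [d1 Hd1]. simpl in Hd1.
  assert (Hloc : locally r (fun u => Rabs (u - r) < d1 /\ Rabs (g u - g r) < d1 /\
                                     F u (g u) = F r (g r))).
  { apply filter_and; [now exists d1|].
    apply filter_and; [exact (proj1 (filterlim_locally g (g r)) Hg d1)|exact Hlev]. }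
  destruct Hloc as [d Hd]. exists d. intros h Hh0 Hh.
  destruct (Hd (r + h)) as [H1 [H2 H3]].
  { change (Rabs (r + h - r) < d). now replace (r + h - r) with h by ring. }
  specialize (Hd1 (r + h) (g (r + h)) H1 H2).
  rewrite H3 in Hd1. replace (r + h - r) with h in Hd1 by ring.
  replace (F r (g r) - F r (g r) - (a * h + b * (g (r + h) - g r)))
    with (- (a * h + b * (g (r + h) - g r))) in Hd1 by ring.
  rewrite Rabs_Ropp in Hd1.
  replace ((g (r + h) - g r) / h - - a / b) with ((g (r + h) - g r) / h + a / b) by (field; auto).
  eapply Rle_lt_trans.
  - apply (implicit_quotient_estimate a b h _ e Hb Hh0); [split; [lra|apply Rmin_l]|exact Hd1].
  - replace (e * (2 + 2 * Rabs a / Rabs b) / Rabs b) with (e * K) by (unfold K; field; lra).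
    exact HeK.
Qed.

Lemma differentiable_pt_lim_of_partials (f : R -> R -> R) x y (dfx : R -> R -> R) dfy :
  locally (x, y)
    (fun p : R * R => is_derive (fun z => f z (snd p)) (fst p) (dfx (fst p) (snd p))) ->
  is_derive (fun z => f x z) y dfy ->
  continuous (fun p : R * R => dfx (fst p) (snd p)) (x, y) ->
  differentiable_pt_lim f x y (dfx x y) dfy.
Proof. intros. apply filterdiff_differentiable_pt_lim. now apply is_derive_filterdiff. Qed.

Lemma decreasing_of_derive_neg (f f' : R -> R) a b :
  (forall c, a <= c <= b -> derivable_pt_lim f c (f' c)) ->
  (forall c, a < c < b -> f' c < 0) -> a < b -> f b < f a.
Proof.
  intros Hd Hneg Hab. destruct (MVT_cor2 f f' a b Hab Hd) as [c [Hmvt Hc]].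
  specialize (Hneg c Hc). nra.
Qed.

Lemma continuous_of_within_nonneg (f : R -> R) t : 0 < t ->
  filterlim f (within (fun s => 0 <= s) (locally t)) (locally (f t)) -> continuous f t.
Proof.
  intros Ht Hf. apply filterlim_locally. intros eps.
  pose proof (proj1 (filterlim_locally f (f t)) Hf eps) as Hw. unfold within in Hw.
  generalize (filter_and _ _ Hw (locally_pos_of_continuous (fun s => s) t (continuous_id t) Ht)).
  apply filter_imp. intros s [Hs Hpos]. apply Hs. lra.
Qed.

Lemma continuous_integer_valued_const (f : R -> R) a b : a < b ->
  (forall u, a <= u <= b -> continuity_pt f u) ->
  (forall u, a <= u <= b -> exists k : Z, f u = IZR k) -> f a = f b.
Proof.
  intros Hab Hc Hint.
  assert (Hhalf : forall u, a <= u <= b -> forall k : Z, f u <> IZR k + 1 / 2).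
  { intros u Hu k Hk. destruct (Hint u Hu) as [m Hm].
    assert (IZR (2 * (m - k)) = IZR 1) by (rewrite mult_IZR, minus_IZR; simpl; lra).
    apply eq_IZR in H. lia. }
  destruct (Hint a) as [ka Ha]; [lra|]. destruct (Hint b) as [kb Hb]; [lra|].
  assert (Hcont : forall c : R, forall u, a <= u <= b -> continuity_pt (fun x => f x - c) u)
    by (intros c u Hu; apply continuity_pt_minus;
        [now apply Hc|apply continuity_pt_const; now intros ? ?]).
  destruct (Z.lt_trichotomy ka kb) as [Hlt|[->|Hgt]]; [exfalso| |exfalso].
  - assert (IZR ka + 1 <= IZR kb) by (rewrite <- plus_IZR; apply IZR_le; lia).
    destruct (Ranalysis5.IVT_interv (fun x => f x - (IZR ka + 1 / 2)) a b) as [z [Hz Hfz]];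
      try (now apply Hcont); try lra.
    apply (Hhalf z Hz ka). lra.
  - congruence.
  - assert (IZR kb + 1 <= IZR ka) by (rewrite <- plus_IZR; apply IZR_le; lia).
    destruct (Ranalysis5.IVT_interv (fun x => - (f x - (IZR kb + 1 / 2))) a b) as [z [Hz Hfz]];
      try lra.
    + intros u Hu. apply continuity_pt_opp. now apply Hcont.
    + apply (Hhalf z Hz kb). lra.
Qed.

Section RealContinuity.
Context {U : UniformSpace}.

Lemma continuous_Rplus (f g : U -> R) x :
  continuous f x -> continuous g x -> continuous (fun y => f y + g y) x.
Proof. intros. now apply (@continuous_plus U R_AbsRing R_NormedModule). Qed.

Lemma continuous_Ropp (f : U -> R) x : continuous f x -> continuous (fun y => - f y) x.
Proof. intros. now apply (@continuous_opp U R_AbsRing R_NormedModule). Qed.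

Lemma continuous_Rmult (f g : U -> R) x :
  continuous f x -> continuous g x -> continuous (fun y => f y * g y) x.
Proof. intros. now apply (@continuous_mult U R_AbsRing). Qed.

Lemma continuous_Rdiv (f g : U -> R) x :
  continuous f x -> continuous g x -> g x <> 0 -> continuous (fun y => f y / g y) x.
Proof.
  intros. apply continuous_Rmult; auto.
  apply (continuous_comp g Rinv); auto. now apply continuous_Rinv.
Qed.

End RealContinuity.

(** * The complex exponential *)

Lemma Cexp_plus (z w : C) : Cmult (Cexp z) (Cexp w) = Cexp (Cplus z w).
Proof.
  destruct z as [a b], w as [c d]. unfold Cmult, Cexp, Cplus; simpl.
  rewrite exp_plus, cos_plus, sin_plus. f_equal; ring.
Qed.

Lemma Cmod_Cexp (z : C) : Cmod (Cexp z) = exp (Re z).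
Proof.
  destruct z as [a b]. unfold Cmod, Cexp; simpl.
  pose proof (sin2_cos2 b) as Hsc. unfold Rsqr in Hsc.
  replace (exp a * cos b * (exp a * cos b * 1) + exp a * sin b * (exp a * sin b * 1))
    with (exp a ^ 2 * (sin b * sin b + cos b * cos b)) by ring.
  rewrite Hsc, Rmult_1_r.
  apply sqrt_pow2. left. apply exp_pos.
Qed.

Lemma Cexp_polar (a b : R) : Cexp (a, b) = Cmult (RtoC (exp a)) (Cexp (Cmult Ci (RtoC b))).
Proof.
  unfold Cmult, Cexp, Ci, RtoC; simpl.
  replace (0 * b - 1 * 0) with 0 by ring. replace (0 * 0 + 1 * b) with b by ring.
  rewrite exp_0. f_equal; ring.
Qed.

Lemma Cexp_neq_0 (z : C) : Cexp z <> RtoC 0.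
Proof.
  intros H. apply (f_equal Cmod) in H.
  rewrite Cmod_Cexp, Cmod_0 in H. pose proof (exp_pos (Re z)). lra.
Qed.

Lemma cos_minus_2kPI t (k : Z) : cos (t - 2 * IZR k * PI) = cos t.
Proof.
  assert (Hs : sin (IZR k * PI) = 0) by (apply sin_eq_0_1; now exists k).
  replace (2 * IZR k * PI) with (2 * (IZR k * PI)) by ring.
  rewrite cos_minus, cos_2a_sin, sin_2a, Hs. ring.
Qed.

Lemma sin_minus_2kPI t (k : Z) : sin (t - 2 * IZR k * PI) = sin t.
Proof.
  assert (Hs : sin (IZR k * PI) = 0) by (apply sin_eq_0_1; now exists k).
  replace (2 * IZR k * PI) with (2 * (IZR k * PI)) by ring.
  rewrite sin_minus, cos_2a_sin, sin_2a, Hs. ring.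
Qed.

Lemma Cexp_inj (a b c d : R) :
  Cexp (a, b) = Cexp (c, d) -> a = c /\ exists k : Z, b = d + 2 * IZR k * PI.
Proof.
  intros H.
  assert (Hac : a = c).
  { apply exp_inv. apply (f_equal Cmod) in H. now rewrite !Cmod_Cexp in H. }
  subst c. split; [reflexivity|].
  unfold Cexp in H; simpl in H. injection H as Hc Hs.
  pose proof (exp_pos a).
  assert (Hcb : cos b = cos d) by (apply (Rmult_eq_reg_l (exp a)); lra).
  assert (Hsb : sin b = sin d) by (apply (Rmult_eq_reg_l (exp a)); lra).
  assert (Hc1 : cos (2 * ((b - d) / 2)) = 1)
    by (replace (2 * ((b - d) / 2)) with (b - d) by field; rewrite cos_minus, Hcb, Hsb;
        pose proof (sin2_cos2 d); unfold Rsqr in *; lra).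
  rewrite cos_2a_sin in Hc1.
  destruct (sin_eq_0_0 ((b - d) / 2)) as [k Hk]; [nra|].
  exists k. lra.
Qed.

Lemma acos_atan_neg x y : y < 0 -> acos (x / sqrt (x ^ 2 + y ^ 2)) = PI / 2 - atan (x / - y).
Proof.
  intros Hy.
  set (s := sqrt (x ^ 2 + y ^ 2)).
  assert (Hs : 0 < s) by (apply sqrt_lt_R0; nra).
  assert (Hss : s * s = x ^ 2 + y ^ 2) by (apply sqrt_sqrt; nra).
  assert (Hu : -1 < x / s < 1).
  { split; apply (Rmult_lt_reg_r s); auto; unfold Rdiv;
      rewrite Rmult_assoc, Rinv_l by lra; nra. }
  rewrite acos_asin, asin_atan by lra.
  f_equal. f_equal.
  assert (H1 : 1 - (x / s)² = (- y / s) ^ 2) by (unfold Rsqr; field_simplify_eq; [nra|lra]).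
  rewrite H1, sqrt_pow2 by (apply Rdiv_le_0_compat; lra).
  field. lra.
Qed.

(** * phi in log-polar coordinates *)

Definition sq_dist_i (r t : R) : R := (exp r * cos t) ^ 2 + (exp r * sin t - 1) ^ 2.

Definition shifted_arg (r t : R) : R := atan (exp r * cos t / (1 - exp r * sin t)).

Lemma sq_dist_i_eq r t : sq_dist_i r t = exp r ^ 2 - 2 * exp r * sin t + 1.
Proof.
  unfold sq_dist_i. pose proof (sin2_cos2 t) as H. unfold Rsqr in H.
  replace ((exp r * cos t) ^ 2 + (exp r * sin t - 1) ^ 2)
    with (exp r ^ 2 * (sin t * sin t + cos t * cos t) - 2 * exp r * sin t + 1) by ring.
  rewrite H. ring.
Qed.

Lemma sq_dist_i_pos r t : exp r * sin t < 1 -> 0 < sq_dist_i r t.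
Proof. intros H. unfold sq_dist_i. nra. Qed.

Lemma ln_sqrt x : 0 < x -> ln (sqrt x) = ln x / 2.
Proof.
  intros H. pose proof (sqrt_lt_R0 x H).
  assert (ln x = ln (sqrt x * sqrt x)) by (rewrite sqrt_sqrt; lra).
  rewrite H1, ln_mult by lra. field.
Qed.

Lemma Clog_Cexp_minus_i r t : exp r * sin t < 1 ->
  Clog (Cminus (Cexp (r, t)) Ci) = (ln (sq_dist_i r t) / 2, shifted_arg r t - PI / 2).
Proof.
  intros H.
  replace (Cminus (Cexp (r, t)) Ci) with (exp r * cos t, exp r * sin t - 1)
    by (unfold Cminus, Cplus, Copp, Cexp, Ci; simpl; f_equal; ring).
  pose proof (sq_dist_i_pos r t H) as HD.
  unfold Clog, Arg, Cmod, Re, Im; simpl.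
  change (exp r * cos t * (exp r * cos t * 1) + (exp r * sin t - 1) * ((exp r * sin t - 1) * 1))
    with (sq_dist_i r t).
  f_equal.
  - now rewrite ln_sqrt.
  - destruct (Rle_dec 0 (exp r * sin t - 1)); [lra|].
    unfold sq_dist_i. rewrite acos_atan_neg by lra. unfold shifted_arg.
    replace (- (exp r * sin t - 1)) with (1 - exp r * sin t) by ring. ring.
Qed.

Lemma phi_Cexp r t : exp r * sin t < 1 ->
  phi (Cexp (r, t)) =
  Cexp (r - ln (sq_dist_i r t) / 2 - shifted_arg r t + PI / 2,
        t + ln (sq_dist_i r t) / 2 - shifted_arg r t + PI / 2).
Proof.
  intros H. unfold phi. rewrite Clog_Cexp_minus_i, Cexp_plus by exact H.
  f_equal. unfold Cmult, Cminus, Cplus, Copp, Ci; simpl. f_equal; ring.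
Qed.

Lemma tip_rhs_Cexp t :
  Cmult (Cexp (Cmult (Cminus Ci 1) (RtoC t))) (phi (RtoC 1)) =
  Cexp (- t - ln 2 / 2 + PI / 4, t + ln 2 / 2 + PI / 4).
Proof.
  replace (RtoC 1) with (Cexp (0, 0))
    by (unfold Cexp, RtoC; simpl; rewrite exp_0, cos_0, sin_0; f_equal; ring).
  rewrite phi_Cexp by (rewrite sin_0; lra).
  replace (sq_dist_i 0 0) with 2 by (unfold sq_dist_i; rewrite exp_0, cos_0, sin_0; ring).
  replace (shifted_arg 0 0) with (PI / 4)
    by (unfold shifted_arg; rewrite exp_0, cos_0, sin_0, <- atan_1; f_equal; field).
  rewrite Cexp_plus. f_equal. unfold Cmult, Cminus, Cplus, Copp, Ci, RtoC; simpl.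
  rewrite exp_0, cos_0, sin_0. f_equal; lra.
Qed.

Definition defect (r t : R) : R := r + t + PI / 2 - 2 * shifted_arg r t.

Definition clock (r t : R) : R := (t - r) / 2 + ln (sq_dist_i r t) / 2 - ln 2 / 2.

Definition defect_r (r t : R) : R := 1 - 2 * exp r * cos t / sq_dist_i r t.

Definition defect_t (r t : R) : R := (1 - exp r ^ 2) / sq_dist_i r t.

Lemma phi_Cexp_tip r t tau : exp r * sin t < 1 -> defect r t = 0 -> clock r t = tau ->
  phi (Cexp (r, t)) = Cmult (Cexp (Cmult (Cminus Ci 1) (RtoC tau))) (phi (RtoC 1)).
Proof.
  intros H HE HT. rewrite phi_Cexp, tip_rhs_Cexp by exact H.
  unfold defect, clock in *. f_equal. f_equal; lra.
Qed.

Lemma tip_phi_Cexp r t tau : exp r * sin t < 1 ->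
  phi (Cexp (r, t)) = Cmult (Cexp (Cmult (Cminus Ci 1) (RtoC tau))) (phi (RtoC 1)) ->
  exists k : Z, defect r t = 2 * IZR k * PI /\ clock r t = tau + IZR k * PI.
Proof.
  intros H Heq. rewrite phi_Cexp, tip_rhs_Cexp in Heq by exact H.
  apply Cexp_inj in Heq. destruct Heq as [Hre [k Him]].
  exists k. unfold defect, clock. split; lra.
Qed.

Lemma defect_minus_2kPI r t (k : Z) : defect r (t - 2 * IZR k * PI) = defect r t - 2 * IZR k * PI.
Proof. unfold defect, shifted_arg. rewrite cos_minus_2kPI, sin_minus_2kPI. ring. Qed.

Lemma clock_minus_2kPI r t (k : Z) : clock r (t - 2 * IZR k * PI) = clock r t - IZR k * PI.
Proof. unfold clock, sq_dist_i. rewrite cos_minus_2kPI, sin_minus_2kPI. field. Qed.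

Ltac solve_partial r t :=
  intros Hlt; pose proof (sq_dist_i_pos r t Hlt) as HD;
  unfold defect, clock, shifted_arg, defect_r, defect_t, sq_dist_i in *;
  auto_derive; [lra || nra|];
  pose proof (sin2_cos2 t) as Hsc; unfold Rsqr in Hsc;
  field_simplify_eq; [|repeat split; nra];
  assert (cos t ^ 2 = 1 - sin t ^ 2) as Hc by nra;
  try replace (cos t ^ 4) with ((cos t ^ 2) ^ 2) by ring; rewrite ?Hc; ring.

Lemma is_derive_defect_t r t : exp r * sin t < 1 ->
  is_derive (fun u => defect r u) t (defect_t r t).
Proof. solve_partial r t. Qed.

Lemma is_derive_defect_r r t : exp r * sin t < 1 ->
  is_derive (fun u => defect u t) r (defect_r r t).
Proof. solve_partial r t. Qed.

Lemma is_derive_clock_t r t : exp r * sin t < 1 ->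
  is_derive (fun u => clock r u) t (defect_r r t / 2).
Proof. solve_partial r t. Qed.

Lemma is_derive_clock_r r t : exp r * sin t < 1 ->
  is_derive (fun u => clock u t) r (- defect_t r t / 2).
Proof. solve_partial r t. Qed.

Lemma continuous_exp_cos r t : continuous (fun p : R * R => exp (fst p) * cos (snd p)) (r, t).
Proof.
  apply continuous_Rmult.
  - apply (continuous_comp fst exp); [apply continuous_fst|apply continuous_exp].
  - apply (continuous_comp snd cos); [apply continuous_snd|apply continuous_cos].
Qed.

Lemma continuous_exp_sin r t : continuous (fun p : R * R => exp (fst p) * sin (snd p)) (r, t).
Proof.
  apply continuous_Rmult.
  - apply (continuous_comp fst exp); [apply continuous_fst|apply continuous_exp].
  - apply (continuous_comp snd sin); [apply continuous_snd|apply continuous_sin].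
Qed.

Lemma continuous_sq_dist_i r t : continuous (fun p : R * R => sq_dist_i (fst p) (snd p)) (r, t).
Proof.
  assert (Hsq : forall f : R * R -> R, continuous f (r, t) -> continuous (fun p => f p ^ 2) (r, t)).
  { intros f Hf. simpl. repeat apply continuous_Rmult; auto. apply continuous_const. }
  unfold sq_dist_i. apply continuous_Rplus; apply Hsq; [apply continuous_exp_cos|].
  apply continuous_Rplus; [apply continuous_exp_sin|apply continuous_const].
Qed.

Lemma continuous_defect_r r t : exp r * sin t < 1 ->
  continuous (fun p : R * R => defect_r (fst p) (snd p)) (r, t).
Proof.
  intros H. unfold defect_r. apply continuous_Rplus; [apply continuous_const|].
  apply continuous_Ropp, continuous_Rdiv; [|apply continuous_sq_dist_i|].
  - apply (continuous_ext (fun p : R * R => 2 * (exp (fst p) * cos (snd p))));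
      [intros; simpl; ring|].
    apply continuous_Rmult; [apply continuous_const|apply continuous_exp_cos].
  - simpl. pose proof (sq_dist_i_pos r t H). lra.
Qed.

Lemma continuous_defect_t r t : exp r * sin t < 1 ->
  continuous (fun p : R * R => defect_t (fst p) (snd p)) (r, t).
Proof.
  intros H. unfold defect_t. apply continuous_Rdiv; [|apply continuous_sq_dist_i|].
  - apply continuous_Rplus; [apply continuous_const|]. apply continuous_Ropp. simpl.
    repeat apply continuous_Rmult; try apply continuous_const;
      exact (continuous_comp fst exp _ (continuous_fst _ _) (continuous_exp _)).
  - simpl. pose proof (sq_dist_i_pos r t H). lra.
Qed.

Lemma locally_exp_sin_lt_1 r t : exp r * sin t < 1 ->
  locally (r, t) (fun p : R * R => exp (fst p) * sin (snd p) < 1).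
Proof.
  intros H. assert (Hpos : locally (r, t) (fun p : R * R => 0 < 1 - exp (fst p) * sin (snd p))).
  { apply locally_pos_of_continuous; simpl; [|lra].
    apply continuous_Rplus; [apply continuous_const|apply continuous_Ropp, continuous_exp_sin]. }
  revert Hpos. apply filter_imp. intros p Hp. lra.
Qed.

Lemma differentiable_defect r t : exp r * sin t < 1 ->
  differentiable_pt_lim defect r t (defect_r r t) (defect_t r t).
Proof.
  intros H. apply differentiable_pt_lim_of_partials.
  - generalize (locally_exp_sin_lt_1 r t H). apply filter_imp.
    intros p Hp. now apply is_derive_defect_r.
  - now apply is_derive_defect_t.
  - now apply continuous_defect_r.
Qed.

Lemma differentiable_clock r t : exp r * sin t < 1 ->
  differentiable_pt_lim clock r t (- defect_t r t / 2) (defect_r r t / 2).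
Proof.
  intros H. apply (differentiable_pt_lim_of_partials clock r t (fun a b => - defect_t a b / 2)).
  - generalize (locally_exp_sin_lt_1 r t H). apply filter_imp.
    intros p Hp. now apply is_derive_clock_r.
  - now apply is_derive_clock_t.
  - apply continuous_Rdiv; [|apply continuous_const|simpl; lra].
    now apply continuous_Ropp, continuous_defect_t.
Qed.

(** * The level curve [defect = 0] *)

Lemma PI_gt_3 : 3 < PI.
Proof. pose proof PI2_3_2. lra. Qed.

Lemma exp_sin_lt_1 r t : r < 0 -> exp r * sin t < 1.
Proof.
  intros Hr. pose proof (SIN_bound t). pose proof (exp_pos r).
  pose proof (exp_increasing r 0 Hr). rewrite exp_0 in *. nra.
Qed.

Lemma defect_t_pos r t : r < 0 -> 0 < defect_t r t.
Proof.
  intros Hr. unfold defect_t. pose proof (sq_dist_i_pos r t (exp_sin_lt_1 r t Hr)).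
  pose proof (exp_increasing r 0 Hr). pose proof (exp_pos r). rewrite exp_0 in *.
  apply Rdiv_lt_0_compat; nra.
Qed.

Lemma defect_increasing r s t : r < 0 -> s < t -> defect r s < defect r t.
Proof.
  intros Hr Hst.
  apply (incr_function (defect r) m_infty p_infty (defect_t r)); [| |easy|exact Hst|easy].
  - intros u _ _. now apply is_derive_defect_t, exp_sin_lt_1.
  - intros u _ _. now apply defect_t_pos.
Qed.

Lemma defect_bounds r t : r + t - PI / 2 < defect r t < r + t + 3 * PI / 2.
Proof.
  unfold defect, shifted_arg. pose proof (atan_bound (exp r * cos t / (1 - exp r * sin t))). lra.
Qed.

Lemma defect_root_exists r : r < 0 -> exists t, defect r t = 0.
Proof.
  intros Hr.
  destruct (IVT_gen_consistent (defect r) (- r - 2 * PI) (- r + PI) 0) as [t [_ Ht]].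
  - intros t. apply (ex_derive_continuous (defect r)). eexists.
    now apply is_derive_defect_t, exp_sin_lt_1.
  - pose proof (defect_bounds r (- r - 2 * PI)). pose proof (defect_bounds r (- r + PI)).
    pose proof PI_RGT_0. rewrite Rmin_left, Rmax_right; lra.
  - now exists t.
Qed.

(* The junk value 0 for r >= 0, like that of log_radius for t <= 0, makes
   Cexp (log_radius t, curve_angle (log_radius t)) equal to 1 at t = 0. *)
Definition curve_angle (r : R) : R :=
  match Rlt_dec r 0 with
  | left Hr => proj1_sig (constructive_indefinite_description _ (defect_root_exists r Hr))
  | right _ => 0
  end.

Lemma curve_angle_spec r : r < 0 -> defect r (curve_angle r) = 0.
Proof.
  intros Hr. unfold curve_angle. destruct (Rlt_dec r 0) as [H|]; [|lra].
  exact (proj2_sig (constructive_indefinite_description _ (defect_root_exists r H))).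
Qed.

Lemma curve_angle_nonneg_arg r : 0 <= r -> curve_angle r = 0.
Proof. intros Hr. unfold curve_angle. destruct (Rlt_dec r 0); [exfalso; lra|reflexivity]. Qed.

Lemma curve_angle_between r a b : r < 0 -> defect r a < 0 -> 0 < defect r b ->
  a < curve_angle r < b.
Proof.
  intros Hr Ha Hb. pose proof (curve_angle_spec r Hr) as H0. split.
  - destruct (Rlt_le_dec a (curve_angle r)) as [|[Hlt|Heq]]; [easy| |];
      [pose proof (defect_increasing r _ _ Hr Hlt)|rewrite Heq in H0]; lra.
  - destruct (Rlt_le_dec (curve_angle r) b) as [|[Hlt|Heq]]; [easy| |];
      [pose proof (defect_increasing r _ _ Hr Hlt)|rewrite <- Heq in H0]; lra.
Qed.

Lemma curve_angle_unique r t : r < 0 -> defect r t = 0 -> t = curve_angle r.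
Proof.
  intros Hr Ht. pose proof (curve_angle_spec r Hr) as H0.
  destruct (Rtotal_order t (curve_angle r)) as [Hlt|[Heq|Hgt]]; auto;
    [pose proof (defect_increasing r _ _ Hr Hlt)|pose proof (defect_increasing r _ _ Hr Hgt)]; lra.
Qed.

Lemma curve_angle_bounds r : r < 0 -> - r - 3 * PI / 2 < curve_angle r < - r + PI / 2.
Proof.
  intros Hr. apply curve_angle_between; auto.
  - pose proof (defect_bounds r (- r - 3 * PI / 2)). lra.
  - pose proof (defect_bounds r (- r + PI / 2)). lra.
Qed.

Lemma continuous_curve_angle r : r < 0 -> continuous curve_angle r.
Proof.
  intros Hr. apply (continuous_implicit_zero defect (fun _ => True)).
  - exists (mkposreal (- r) ltac:(lra)). intros u Hu.
    change (Rabs (u - r) < - r) in Hu. apply Rabs_def2 in Hu.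
    split; [easy|split; [apply curve_angle_spec; lra|]].
    intros s t _ _. apply defect_increasing. lra.
  - now exists (mkposreal 1 Rlt_0_1).
  - intros t _. apply (ex_derive_continuous (fun u => defect u t)). eexists.
    now apply is_derive_defect_r, exp_sin_lt_1.
Qed.

Definition curve_angle_deriv (r : R) : R :=
  - defect_r r (curve_angle r) / defect_t r (curve_angle r).

Lemma derivable_curve_angle r : r < 0 -> derivable_pt_lim curve_angle r (curve_angle_deriv r).
Proof.
  intros Hr. apply (derivable_pt_lim_implicit defect).
  - now apply differentiable_defect, exp_sin_lt_1.
  - pose proof (defect_t_pos r (curve_angle r) Hr). lra.
  - now apply continuous_curve_angle.
  - exists (mkposreal (- r) ltac:(lra)). intros u Hu.
    change (Rabs (u - r) < - r) in Hu. apply Rabs_def2 in Hu.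
    rewrite !curve_angle_spec; lra.
Qed.

Lemma defect_r_eq r t : exp r * sin t < 1 ->
  defect_r r t = (exp r ^ 2 - 2 * exp r * (sin t + cos t) + 1) / sq_dist_i r t.
Proof.
  intros H. pose proof (sq_dist_i_pos r t H).
  unfold defect_r. field_simplify_eq; [|lra]. rewrite sq_dist_i_eq. ring.
Qed.

Lemma defect_circle t : - 3 * PI / 2 < t < PI / 2 -> defect 0 t = 0.
Proof.
  intros Ht. unfold defect, shifted_arg. rewrite exp_0, !Rmult_1_l.
  set (u := PI / 4 + t / 2).
  assert (Hc : 0 < cos u) by (apply cos_gt_0; unfold u; lra).
  replace t with (2 * u - PI / 2) by (unfold u; lra).
  rewrite cos_minus, sin_minus, cos_PI2, sin_PI2, sin_2a, cos_2a_cos.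
  match goal with |- context [atan ?a] => replace a with (tan u) end.
  - rewrite atan_tan by (unfold u; lra). lra.
  - unfold tan. field_simplify_eq; [ring|split; nra].
Qed.

Lemma defect_radial_mvt r t : r < 0 -> sin t < 1 -> defect 0 t = 0 ->
  exists c, r < c < 0 /\ defect r t = r * defect_r c t.
Proof.
  intros Hr Hs Hcirc.
  destruct (MVT_cor2 (fun u => defect u t) (fun u => defect_r u t) r 0 Hr) as [c [Hmvt Hc]].
  - intros u Hu. apply is_derive_Reals, is_derive_defect_r.
    pose proof (exp_pos u). pose proof (SIN_bound t).
    destruct (Req_dec u 0) as [->|]; [rewrite exp_0; lra|].
    pose proof (exp_sin_lt_1 u t ltac:(lra)). lra.
  - exists c. split; [exact Hc|]. rewrite Hcirc in Hmvt. lra.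
Qed.

Lemma first_quadrant t : - 3 * PI / 2 < t < PI -> 0 < sin t -> 0 < cos t -> 0 < t < PI / 2.
Proof.
  intros Ht Hs Hc. pose proof PI_RGT_0 as HPI. split.
  - destruct (Rlt_le_dec 0 t) as [|Hle]; [easy|exfalso].
    destruct (Rlt_le_dec (- PI) t).
    + destruct (Req_dec t 0) as [->|]; [rewrite sin_0 in Hs; lra|].
      pose proof (sin_lt_0_var t ltac:(lra) ltac:(lra)). lra.
    + pose proof (cos_le_0 (t + 2 * PI) ltac:(lra) ltac:(lra)) as Hcos.
      replace (t + 2 * PI) with (t + 2 * INR 1 * PI) in Hcos by (simpl; ring).
      rewrite cos_period in Hcos. lra.
  - destruct (Rlt_le_dec t (PI / 2)) as [|Hle]; [easy|exfalso].
    pose proof (cos_le_0 t Hle ltac:(lra)). lra.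
Qed.

Lemma ln_3_lt_PI2 : ln 3 < PI / 2.
Proof.
  rewrite <- (ln_exp (PI / 2)). apply ln_increasing; [lra|].
  replace (PI / 2) with (PI / 4 + PI / 4) by field. rewrite exp_plus.
  pose proof (exp_ineq1 (PI / 4) ltac:(pose proof PI_RGT_0; lra)). pose proof PI_gt_3. nra.
Qed.

(* If defect_r <= 0, then e^(r + it) lies in the disc |z - (1 + i)| <= 1, which forces
   0 < t < PI / 2 and - r < ln 3.  So defect (., t) vanishes at r and on the unit circle,
   and defect_r x t = 0 for some r < x < 0: then e^x is a root and e^r a non-positive point
   of l^2 - 2 l (sin t + cos t) + 1, whose roots have product 1, contradicting e^r < e^x < 1. *)
Lemma defect_r_pos_on_curve r : r < 0 -> 0 < defect_r r (curve_angle r).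
Proof.
  intros Hr. set (t := curve_angle r).
  pose proof (curve_angle_bounds r Hr) as Hb. fold t in Hb.
  pose proof (sq_dist_i_pos r t (exp_sin_lt_1 r t Hr)) as HD.
  pose proof (sin2_cos2 t) as Hsc. unfold Rsqr in Hsc.
  set (mu := exp r). set (s := sin t) in *. set (c := cos t) in *.
  assert (Hmu : 0 < mu < 1) by (split; [apply exp_pos|rewrite <- exp_0; now apply exp_increasing]).
  destruct (Rlt_le_dec 0 (defect_r r t)) as [|Hneg]; [easy|exfalso].
  rewrite defect_r_eq in Hneg by now apply exp_sin_lt_1. fold mu s c in Hneg.
  assert (Hq : mu ^ 2 - 2 * mu * (s + c) + 1 <= 0).
  { apply Rmult_le_compat_r with (r := sq_dist_i r t) in Hneg; [|lra].
    unfold Rdiv in Hneg. rewrite Rmult_assoc, Rinv_l, Rmult_0_l in Hneg by lra. lra. }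
  assert (Hsc1 : 1 < s + c) by nra.
  assert (Hs : 0 < s) by nra. assert (Hc : 0 < c) by nra.
  assert (Hsc2 : s + c < 3 / 2) by (pose proof (pow2_ge_0 (s - c)); nra).
  assert (Hmu3 : 1 / 3 < mu) by nra.
  assert (Hr3 : - ln 3 < r).
  { rewrite <- ln_Rinv, <- (ln_exp r) by lra. apply ln_increasing; [lra|]. fold mu. lra. }
  pose proof ln_3_lt_PI2. pose proof PI_gt_3.
  assert (Hq1 : 0 < t < PI / 2) by (apply first_quadrant; auto; lra).
  assert (Hs1 : s < 1) by nra.
  destruct (defect_radial_mvt r t Hr Hs1) as [x [Hx Hmvt]].
  { apply defect_circle. lra. }
  unfold t in Hmvt. rewrite (curve_angle_spec r Hr) in Hmvt. fold t in Hmvt.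
  assert (Hzero : defect_r x t = 0) by nra.
  pose proof (sq_dist_i_pos x t (exp_sin_lt_1 x t ltac:(lra))).
  rewrite defect_r_eq in Hzero by (apply exp_sin_lt_1; lra). fold s c in Hzero.
  set (l := exp x) in *.
  assert (Hl : mu < l < 1)
    by (split; [now apply exp_increasing|rewrite <- exp_0; apply exp_increasing; lra]).
  assert (Hql : l ^ 2 - 2 * l * (s + c) + 1 = 0).
  { unfold Rdiv in Hzero. apply Rmult_integral in Hzero.
    destruct Hzero as [|Hinv]; [easy|]. exfalso. revert Hinv. apply Rinv_neq_0_compat. lra. }
  nra.
Qed.

Lemma curve_angle_deriv_neg r : r < 0 -> curve_angle_deriv r < 0.
Proof.
  intros Hr. unfold curve_angle_deriv.
  pose proof (defect_r_pos_on_curve r Hr). pose proof (defect_t_pos r (curve_angle r) Hr).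
  unfold Rdiv. rewrite <- Ropp_mult_distr_l. apply Ropp_lt_gt_0_contravar.
  apply Rmult_lt_0_compat; [easy|now apply Rinv_0_lt_compat].
Qed.

Lemma defect_neg r t : r < 0 -> - (PI / 2) < t <= 0 -> defect r t < 0.
Proof.
  intros Hr Ht.
  assert (Hs : sin t <= 0).
  { destruct (Req_dec t 0) as [->|]; [rewrite sin_0; lra|].
    left. apply sin_lt_0_var; pose proof PI_RGT_0; lra. }
  assert (Hc : cos t <= 1) by apply COS_bound.
  destruct (defect_radial_mvt r t Hr ltac:(lra)) as [x [Hx ->]].
  { apply defect_circle. pose proof PI_RGT_0. lra. }
  cut (0 < defect_r x t); [nra|].
  pose proof (exp_sin_lt_1 x t ltac:(lra)) as Hlt.
  rewrite defect_r_eq by exact Hlt. apply Rdiv_lt_0_compat; [|now apply sq_dist_i_pos].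
  pose proof (exp_pos x). assert (exp x < 1) by (rewrite <- exp_0; apply exp_increasing; lra).
  nra.
Qed.

Lemma defect_pos_near_circle r t : 0 < t < PI / 2 -> - ln (sin t + cos t) < r < 0 ->
  0 < defect r t.
Proof.
  intros Ht Hr.
  assert (Hs : 0 < sin t) by (apply sin_gt_0; pose proof PI_RGT_0; lra).
  assert (Hc : 0 < cos t) by (apply cos_gt_0; pose proof PI_RGT_0; lra).
  pose proof (sin2_cos2 t) as Hsc. unfold Rsqr in Hsc.
  destruct (defect_radial_mvt r t ltac:(lra) ltac:(nra)) as [x [Hx ->]].
  { apply defect_circle. pose proof PI_RGT_0. lra. }
  cut (defect_r x t < 0); [nra|].
  pose proof (exp_sin_lt_1 x t ltac:(lra)) as Hlt.
  rewrite defect_r_eq by exact Hlt.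
  apply Rdiv_neg_pos; [|now apply sq_dist_i_pos].
  assert (Hlam : 1 < exp x * (sin t + cos t)).
  { assert (Hq : exp (- ln (sin t + cos t)) < exp x) by (apply exp_increasing; lra).
    rewrite exp_Ropp, exp_ln in Hq by nra.
    apply (Rmult_lt_compat_r (sin t + cos t)) in Hq; [|nra]. rewrite Rinv_l in Hq by nra. lra. }
  assert (exp x < 1) by (rewrite <- exp_0; apply exp_increasing; lra).
  pose proof (exp_pos x). nra.
Qed.

Lemma curve_angle_pos r : r < 0 -> 0 < curve_angle r.
Proof.
  intros Hr. apply (curve_angle_between r 0 (- r + PI / 2) Hr).
  - apply defect_neg; [easy|]. pose proof PI_RGT_0. lra.
  - pose proof (defect_bounds r (- r + PI / 2)). lra.
Qed.

Lemma curve_angle_small eps : 0 < eps < PI / 2 ->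
  exists d, 0 < d /\ forall r, - d < r < 0 -> 0 < curve_angle r < eps.
Proof.
  intros He.
  assert (Hs : 0 < sin eps) by (apply sin_gt_0; pose proof PI_RGT_0; lra).
  assert (Hc : 0 < cos eps) by (apply cos_gt_0; pose proof PI_RGT_0; lra).
  pose proof (sin2_cos2 eps) as Hsc. unfold Rsqr in Hsc.
  exists (ln (sin eps + cos eps)). split; [rewrite <- ln_1; apply ln_increasing; nra|].
  intros r Hr. split; [apply curve_angle_pos; lra|].
  apply (curve_angle_between r (- (PI / 4)) eps); [lra| |].
  - apply defect_neg; [lra|]. pose proof PI_RGT_0. lra.
  - apply defect_pos_near_circle; lra.
Qed.

Lemma curve_angle_decreasing a b : a < b -> b < 0 -> curve_angle b < curve_angle a.
Proof.
  intros Hab Hb. apply (decreasing_of_derive_neg curve_angle curve_angle_deriv); auto.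
  - intros c Hc. apply derivable_curve_angle. lra.
  - intros c Hc. apply curve_angle_deriv_neg. lra.
Qed.

(** * The clock along the curve and its inverse *)

Definition curve_time (r : R) : R := clock r (curve_angle r).

(* The partial derivatives of clock are (- defect_t, defect_r) / 2 (Cauchy-Riemann for the
   logarithm of phi), so this is clock_r + clock_t * curve_angle_deriv. *)
Definition curve_time_deriv (r : R) : R :=
  - (defect_t r (curve_angle r) ^ 2 + defect_r r (curve_angle r) ^ 2)
  / (2 * defect_t r (curve_angle r)).

Lemma derivable_curve_time r : r < 0 -> derivable_pt_lim curve_time r (curve_time_deriv r).
Proof.
  intros Hr. pose proof (defect_t_pos r (curve_angle r) Hr).
  replace (curve_time_deriv r)
    with (- defect_t r (curve_angle r) / 2 * 1
          + defect_r r (curve_angle r) / 2 * curve_angle_deriv r)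
    by (unfold curve_time_deriv, curve_angle_deriv; field; lra).
  apply (derivable_pt_lim_comp_2d clock id curve_angle).
  - now apply differentiable_clock, exp_sin_lt_1.
  - apply derivable_pt_lim_id.
  - now apply derivable_curve_angle.
Qed.

Lemma curve_time_deriv_neg r : r < 0 -> curve_time_deriv r < 0.
Proof.
  intros Hr. unfold curve_time_deriv. pose proof (defect_t_pos r (curve_angle r) Hr).
  unfold Rdiv. rewrite <- Ropp_mult_distr_l. apply Ropp_lt_gt_0_contravar.
  apply Rmult_lt_0_compat; [nra|]. apply Rinv_0_lt_compat. lra.
Qed.

Lemma curve_time_decreasing a b : a < b -> b < 0 -> curve_time b < curve_time a.
Proof.
  intros Hab Hb. apply (decreasing_of_derive_neg curve_time curve_time_deriv); auto.
  - intros c Hc. apply derivable_curve_time. lra.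
  - intros c Hc. apply curve_time_deriv_neg. lra.
Qed.

Lemma curve_time_upper r : r < 0 -> curve_time r < - r + PI / 4 + ln 2 / 2.
Proof.
  intros Hr. unfold curve_time, clock. pose proof (curve_angle_bounds r Hr).
  set (t := curve_angle r) in *.
  pose proof (sq_dist_i_pos r t (exp_sin_lt_1 r t Hr)).
  assert (sq_dist_i r t <= 2 * 2).
  { rewrite sq_dist_i_eq. pose proof (exp_increasing r 0 Hr). rewrite exp_0 in *.
    pose proof (exp_pos r). pose proof (SIN_bound t). nra. }
  assert (ln (sq_dist_i r t) <= ln 2 + ln 2).
  { rewrite <- ln_mult by lra. destruct (Req_dec (sq_dist_i r t) (2 * 2)) as [->|]; [lra|].
    left. apply ln_increasing; lra. }
  lra.
Qed.

Lemma curve_time_lower r : r <= -1 -> - r - 3 * PI / 4 - 3 * ln 2 / 2 <= curve_time r.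
Proof.
  intros Hr. unfold curve_time, clock. pose proof (curve_angle_bounds r ltac:(lra)).
  set (t := curve_angle r) in *.
  assert (Hexp : exp r < / 2).
  { assert (He1 : exp (- (1)) < / 2).
    { rewrite exp_Ropp. pose proof (exp_ineq1 1 R1_neq_R0). apply Rinv_lt_contravar; nra. }
    destruct (Req_dec r (- (1))) as [->|]; [easy|].
    pose proof (exp_increasing r (- (1)) ltac:(lra)). lra. }
  assert (Hq : / 2 * / 2 <= sq_dist_i r t).
  { rewrite sq_dist_i_eq. pose proof (exp_pos r). pose proof (SIN_bound t). nra. }
  assert (ln (/ 2 * / 2) <= ln (sq_dist_i r t)).
  { destruct (Req_dec (sq_dist_i r t) (/ 2 * / 2)) as [->|]; [lra|].
    left. apply ln_increasing; [nra|lra]. }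
  rewrite ln_mult, ln_Rinv in H0 by lra. lra.
Qed.

Lemma clock_0_0 : clock 0 0 = 0.
Proof.
  unfold clock, sq_dist_i. rewrite exp_0, cos_0, sin_0.
  replace ((1 * 1) ^ 2 + (1 * 0 - 1) ^ 2) with 2 by ring. field.
Qed.

Lemma curve_time_small eps : 0 < eps ->
  exists d, 0 < d /\ forall r, - d < r < 0 -> Rabs (curve_time r) < eps.
Proof.
  intros He.
  assert (Hc : continuity_2d_pt clock 0 0).
  { apply differentiable_continuity_pt. do 2 eexists.
    apply differentiable_clock. rewrite sin_0. lra. }
  destruct (Hc (mkposreal eps He)) as [d1 Hd1]. simpl in Hd1.
  destruct (curve_angle_small (Rmin d1 (PI / 4))) as [d2 [Hd2 Hsmall]].
  { split; [apply Rmin_pos; [apply cond_pos|pose proof PI_RGT_0; lra]|].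
    pose proof (Rmin_r d1 (PI / 4)). pose proof PI_RGT_0. lra. }
  exists (Rmin d1 d2). split; [apply Rmin_pos; [apply cond_pos|easy]|].
  intros r Hr. pose proof (Rmin_l d1 d2). pose proof (Rmin_r d1 d2).
  destruct (Hsmall r ltac:(lra)) as [Hpos Hlt]. pose proof (Rmin_l d1 (PI / 4)).
  specialize (Hd1 r (curve_angle r)). rewrite clock_0_0, !Rminus_0_r in Hd1.
  apply Hd1; [rewrite Rabs_left|rewrite Rabs_right]; lra.
Qed.

Lemma curve_time_pos r : r < 0 -> 0 < curve_time r.
Proof.
  intros Hr. apply (Rle_lt_trans _ (curve_time (r / 2))); [|apply curve_time_decreasing; lra].
  destruct (Rle_lt_dec 0 (curve_time (r / 2))) as [|Hneg]; [easy|exfalso].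
  destruct (curve_time_small (- curve_time (r / 2)) ltac:(lra)) as [d [Hd Hsmall]].
  set (r' := Rmax (r / 2) (- d) / 2).
  assert (Hr' : r / 2 < r' < 0 /\ - d < r').
  { pose proof (Rmax_l (r / 2) (- d)). pose proof (Rmax_r (r / 2) (- d)).
    assert (Rmax (r / 2) (- d) < 0) by (apply Rmax_lub_lt; lra). unfold r'. lra. }
  specialize (Hsmall r' ltac:(lra)). apply Rabs_def2 in Hsmall.
  pose proof (curve_time_decreasing (r / 2) r' ltac:(lra) ltac:(lra)). lra.
Qed.

Lemma log_radius_exists t : 0 < t -> exists r, r < 0 /\ curve_time r = t.
Proof.
  intros Ht.
  set (a := - (t + 3 * PI / 4 + 3 * ln 2 / 2 + 2)).
  assert (Hln2 : 0 < ln 2) by (rewrite <- ln_1; apply ln_increasing; lra).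
  assert (Ha : t < curve_time a).
  { pose proof (curve_time_lower a ltac:(unfold a; pose proof PI_RGT_0; lra)). unfold a in *. lra. }
  destruct (curve_time_small t Ht) as [d [Hd Hsmall]].
  set (b := - Rmin d 1 / 2).
  assert (Hb : - d < b < 0).
  { pose proof (Rmin_l d 1). pose proof (Rmin_pos d 1 Hd Rlt_0_1). unfold b. lra. }
  assert (Hab : a < b).
  { pose proof (Rmin_r d 1). pose proof PI_RGT_0. unfold a, b. lra. }
  destruct (Ranalysis5.IVT_interv (fun u => t - curve_time u) a b) as [r [Hr Hrt]]; auto.
  - intros u Hu. apply continuity_pt_minus; [apply continuity_pt_const; now intros ? ?|].
    apply derivable_continuous_pt. exists (curve_time_deriv u). apply derivable_curve_time. lra.
  - lra.
  - specialize (Hsmall b Hb). apply Rabs_def2 in Hsmall. lra.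
  - exists r. split; lra.
Qed.

Definition log_radius (t : R) : R :=
  match Rlt_dec 0 t with
  | left Ht => proj1_sig (constructive_indefinite_description _ (log_radius_exists t Ht))
  | right _ => 0
  end.

Lemma log_radius_spec t : 0 < t -> log_radius t < 0 /\ curve_time (log_radius t) = t.
Proof.
  intros Ht. unfold log_radius. destruct (Rlt_dec 0 t) as [H|]; [|lra].
  exact (proj2_sig (constructive_indefinite_description _ (log_radius_exists t H))).
Qed.

Lemma log_radius_nonpos_arg t : t <= 0 -> log_radius t = 0.
Proof. intros Ht. unfold log_radius. destruct (Rlt_dec 0 t); [exfalso; lra|reflexivity]. Qed.

Lemma log_radius_unique t r : 0 < t -> r < 0 -> curve_time r = t -> log_radius t = r.
Proof.
  intros Ht Hr Hrt. destruct (log_radius_spec t Ht) as [Hl Hlt].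
  destruct (Rtotal_order (log_radius t) r) as [H|[H|H]]; auto;
    [pose proof (curve_time_decreasing _ _ H Hr)|pose proof (curve_time_decreasing _ _ H Hl)]; lra.
Qed.

Lemma log_radius_decreasing s t : 0 < s -> s < t -> log_radius t < log_radius s.
Proof.
  intros Hs Hst. destruct (log_radius_spec s Hs) as [Hs1 Hs2].
  destruct (log_radius_spec t ltac:(lra)) as [Ht1 Ht2].
  destruct (Rlt_le_dec (log_radius t) (log_radius s)) as [|[Hlt|Heq]]; [easy| |];
    [pose proof (curve_time_decreasing _ _ Hlt Ht1)|rewrite Heq in Hs2]; lra.
Qed.

Lemma log_radius_upper t : 0 < t -> log_radius t < - t + PI / 4 + ln 2 / 2.
Proof.
  intros Ht. destruct (log_radius_spec t Ht) as [Hr Hrt].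
  pose proof (curve_time_upper _ Hr). lra.
Qed.

Lemma log_radius_small d : 0 < d -> exists e, 0 < e /\ forall t, 0 < t < e -> - d < log_radius t.
Proof.
  intros Hd. exists (curve_time (- d)). split; [apply curve_time_pos; lra|].
  intros t Ht. destruct (log_radius_spec t ltac:(lra)) as [Hr Hrt].
  destruct (Rlt_le_dec (- d) (log_radius t)) as [|[Hlt|Heq]]; [easy| |];
    [pose proof (curve_time_decreasing _ _ Hlt ltac:(lra))|rewrite Heq in Hrt]; lra.
Qed.

Lemma continuous_log_radius t : 0 < t -> continuous log_radius t.
Proof.
  intros Ht. apply (continuous_implicit_zero (fun u v => u - curve_time v) (fun v => v < 0)).
  - exists (mkposreal t Ht). intros u Hu.
    change (Rabs (u - t) < t) in Hu. apply Rabs_def2 in Hu.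
    destruct (log_radius_spec u ltac:(lra)) as [Hr Hru].
    repeat split; [easy|lra|]. intros s s' Hs Hs' Hss'.
    pose proof (curve_time_decreasing s s' Hss' Hs'). lra.
  - destruct (log_radius_spec t Ht) as [Hr _].
    exists (mkposreal (- log_radius t) ltac:(lra)). intros v Hv.
    change (Rabs (v - log_radius t) < - log_radius t) in Hv. apply Rabs_def2 in Hv. simpl. lra.
  - intros v _. apply (continuous_Rplus (fun u => u) (fun _ => - curve_time v));
      [apply continuous_id|apply continuous_const].
Qed.

Lemma derivable_log_radius t : 0 < t ->
  derivable_pt_lim log_radius t (/ curve_time_deriv (log_radius t)).
Proof.
  intros Ht. destruct (log_radius_spec t Ht) as [Hr Hrt].
  pose proof (curve_time_deriv_neg _ Hr).
  replace (/ curve_time_deriv (log_radius t)) with (- 1 / - curve_time_deriv (log_radius t))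
    by (field; lra).
  apply (derivable_pt_lim_implicit (fun u v => u - curve_time v));
    [| |now apply continuous_log_radius|].
  - apply (differentiable_pt_lim_of_partials _ _ _ (fun _ _ => 1)).
    + apply filter_forall. intros p. auto_derive; [easy|ring].
    + replace (- curve_time_deriv (log_radius t))
        with (0 - curve_time_deriv (log_radius t)) by ring.
      apply is_derive_Reals, (derivable_pt_lim_minus (fun _ => t) curve_time);
        [apply derivable_pt_lim_const|apply derivable_curve_time, Hr].
    + apply continuous_const.
  - lra.
  - exists (mkposreal t Ht). intros u Hu.
    change (Rabs (u - t) < t) in Hu. apply Rabs_def2 in Hu.
    rewrite (proj2 (log_radius_spec u ltac:(lra))), Hrt. ring.
Qed.

Lemma is_lim_log_radius : is_lim log_radius p_infty m_infty.
Proof.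
  apply (is_lim_le_m_loc (fun t => - t + (PI / 4 + ln 2 / 2))).
  - exists 0. intros t Ht. left. pose proof (log_radius_upper t Ht). lra.
  - eapply is_lim_plus; [apply is_lim_opp, is_lim_id|apply is_lim_const|easy].
Qed.

Lemma curve_angle_log_radius_small eps : 0 < eps ->
  exists e, 0 < e /\ forall u, 0 < u < e -> 0 < curve_angle (log_radius u) < eps.
Proof.
  intros He. pose proof PI_RGT_0.
  destruct (curve_angle_small (Rmin eps (PI / 4))) as [d [Hd Hsmall]].
  { split; [apply Rmin_pos; lra|]. pose proof (Rmin_r eps (PI / 4)). lra. }
  destruct (log_radius_small d Hd) as [e [He' Hrad]].
  exists e. split; [easy|]. intros u Hu. pose proof (Rmin_l eps (PI / 4)).
  destruct (Hsmall (log_radius u)); [split; [now apply Hrad|now apply log_radius_spec]|lra].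
Qed.

Lemma continuous_curve_angle_log_radius t : 0 < t ->
  continuous (fun u => curve_angle (log_radius u)) t.
Proof.
  intros Ht. apply (continuous_comp log_radius curve_angle); [now apply continuous_log_radius|].
  apply continuous_curve_angle. now apply log_radius_spec.
Qed.

Lemma filterlim_within_curve_angle_log_radius t : 0 <= t ->
  filterlim (fun u => curve_angle (log_radius u)) (within (fun s => 0 <= s) (locally t))
    (locally (curve_angle (log_radius t))).
Proof.
  intros [Ht|<-].
  - apply (filterlim_filter_le_1 _ (filter_le_within _)).
    now apply continuous_curve_angle_log_radius.
  - rewrite log_radius_nonpos_arg, curve_angle_nonneg_arg by lra.
    apply filterlim_locally. intros eps.
    destruct (curve_angle_log_radius_small eps (cond_pos eps)) as [e [He Hsmall]].
    exists (mkposreal e He). intros u Hu [Hu0|<-].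
    + change (Rabs (u - 0) < e) in Hu. rewrite Rminus_0_r, Rabs_right in Hu by lra.
      change (Rabs (curve_angle (log_radius u) - 0) < eps).
      destruct (Hsmall u (conj Hu0 Hu)). rewrite Rminus_0_r, Rabs_right; lra.
    + rewrite log_radius_nonpos_arg, curve_angle_nonneg_arg by lra. apply ball_center.
Qed.

Lemma is_derive_curve_angle_log_radius t : 0 < t ->
  is_derive (fun u => curve_angle (log_radius u)) t
    (curve_angle_deriv (log_radius t) / curve_time_deriv (log_radius t)).
Proof.
  intros Ht. apply is_derive_Reals. unfold Rdiv.
  apply (derivable_pt_lim_comp log_radius curve_angle);
    [now apply derivable_log_radius|now apply derivable_curve_angle, log_radius_spec].
Qed.

Lemma curve_angle_log_radius_speed_pos t : 0 < t ->
  0 < curve_angle_deriv (log_radius t) / curve_time_deriv (log_radius t).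
Proof.
  intros Ht. destruct (log_radius_spec t Ht) as [Hr _].
  pose proof (curve_angle_deriv_neg _ Hr). pose proof (curve_time_deriv_neg _ Hr).
  assert (/ curve_time_deriv (log_radius t) < 0) by (apply Rinv_lt_0_compat; lra).
  unfold Rdiv. nra.
Qed.

Lemma is_lim_curve_angle_log_radius :
  is_lim (fun t => curve_angle (log_radius t)) p_infty p_infty.
Proof.
  apply (is_lim_le_p_loc (fun t => - log_radius t - 3 * PI / 2)).
  - exists 0. intros t Ht. left. now apply curve_angle_bounds, log_radius_spec.
  - eapply is_lim_minus; [apply is_lim_opp, is_lim_log_radius|apply is_lim_const|easy].
Qed.

(** * Tip traces *)

Lemma tip_trace_polar gamma Theta : tip_trace gamma Theta -> forall t, 0 < t ->
  Cmod (gamma t) = exp (log_radius t) /\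
  exists k : Z, Theta t = curve_angle (log_radius t) + 2 * IZR k * PI.
Proof.
  intros [_ [Hlt [Hphi [_ [_ Hpol]]]]] t Ht.
  set (m := Cmod (gamma t)).
  assert (Hg : gamma t = Cmult (RtoC m) (Cexp (Cmult Ci (RtoC (Theta t))))) by (apply Hpol; lra).
  assert (Hm : 0 < m).
  { destruct (Cmod_ge_0 (gamma t)) as [|Hz]; [easy|exfalso].
    specialize (Hphi t ltac:(lra)). rewrite tip_rhs_Cexp, Hg in Hphi. fold m in Hz.
    rewrite <- Hz, Cmult_0_l in Hphi. unfold phi in Hphi. rewrite Cmult_0_l in Hphi.
    symmetry in Hphi. exact (Cexp_neq_0 _ Hphi). }
  set (rho := ln m).
  assert (Hrho : rho < 0)
    by (unfold rho; rewrite <- ln_1; apply ln_increasing; [easy|now apply Hlt]).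
  assert (Hg' : gamma t = Cexp (rho, Theta t))
    by (rewrite Cexp_polar; unfold rho; now rewrite exp_ln).
  destruct (tip_phi_Cexp rho (Theta t) t (exp_sin_lt_1 _ _ Hrho)) as [k [Hdef Hclk]].
  { rewrite <- Hg'. apply Hphi. lra. }
  assert (Hangle : Theta t - 2 * IZR k * PI = curve_angle rho).
  { apply curve_angle_unique; [easy|]. rewrite defect_minus_2kPI. lra. }
  assert (Hrad : log_radius t = rho).
  { apply log_radius_unique; [easy..|].
    unfold curve_time. rewrite <- Hangle, clock_minus_2kPI. lra. }
  rewrite Hrad. split; [unfold rho; now rewrite exp_ln|]. exists k. lra.
Qed.

(* The integer (Theta u - curve_angle (log_radius u)) / (2 PI) depends continuously on u > 0
   and vanishes near 0, where Theta is close to Theta 0 = 0. *)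
Lemma tip_trace_angle gamma Theta : tip_trace gamma Theta -> forall t, 0 < t ->
  Theta t = curve_angle (log_radius t).
Proof.
  intros Htip t Ht. pose proof Htip as [_ [_ [_ [Hc [H0 _]]]]].
  set (f := fun u => (Theta u - curve_angle (log_radius u)) / (2 * PI)).
  pose proof PI_gt_3 as HPI.
  assert (Hint : forall u, 0 < u -> exists k : Z, f u = IZR k).
  { intros u Hu. destruct (tip_trace_polar gamma Theta Htip u Hu) as [_ [k Hk]].
    exists k. unfold f. rewrite Hk. field. lra. }
  destruct (proj1 (filterlim_locally Theta (Theta 0)) (Hc 0 (Rle_refl 0)) (mkposreal _ PI_RGT_0))
    as [d1 Hd1].
  destruct (curve_angle_log_radius_small (PI / 4) ltac:(lra)) as [e [He Hsmall]].
  set (u := Rmin (Rmin d1 e) t / 2).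
  assert (Hu : 0 < u < t /\ u < d1 /\ u < e).
  { pose proof (Rmin_l (Rmin d1 e) t). pose proof (Rmin_r (Rmin d1 e) t).
    pose proof (Rmin_l d1 e). pose proof (Rmin_r d1 e). pose proof (cond_pos d1).
    assert (0 < Rmin (Rmin d1 e) t) by (repeat apply Rmin_pos; lra). unfold u. lra. }
  assert (Hfu : f u = 0).
  { destruct (Hint u ltac:(lra)) as [k Hk]. rewrite Hk.
    specialize (Hd1 u ltac:(change (Rabs (u - 0) < d1); rewrite Rminus_0_r, Rabs_right; lra)
                  ltac:(lra)).
    change (Rabs (Theta u - Theta 0) < PI) in Hd1. rewrite H0, Rminus_0_r in Hd1.
    apply Rabs_def2 in Hd1.
    pose proof (Hsmall u ltac:(lra)).
    assert (Hk' : -1 < IZR k < 1).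
    { rewrite <- Hk. unfold f. split;
        [apply (Rmult_lt_reg_r (2 * PI))|apply (Rmult_lt_reg_r (2 * PI))]; try lra;
        unfold Rdiv; rewrite Rmult_assoc, Rinv_l, Rmult_1_r by lra; lra. }
    replace k with 0%Z; [easy|].
    destruct Hk' as [Hk1 Hk2]. apply lt_IZR in Hk1, Hk2. lia. }
  assert (Hft : f u = f t).
  { apply continuous_integer_valued_const; [lra| |intros; apply Hint; lra].
    intros v Hv. apply continuity_pt_filterlim.
    apply continuous_Rdiv; [|apply continuous_const|simpl; lra].
    apply (continuous_Rplus Theta (fun w => - curve_angle (log_radius w))).
    - apply continuous_of_within_nonneg; [lra|]. apply Hc. lra.
    - apply continuous_Ropp, continuous_curve_angle_log_radius. lra. }
  rewrite Hfu in Hft. unfold f in Hft.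
  assert (Theta t - curve_angle (log_radius t) = 0); [|lra].
  apply (Rmult_eq_reg_r (/ (2 * PI))); [|apply Rinv_neq_0_compat; lra]. lra.
Qed.

Lemma tip_trace_exists : exists (gamma : R -> C) (Theta : R -> R), tip_trace gamma Theta.
Proof.
  exists (fun t => Cexp (log_radius t, curve_angle (log_radius t))),
         (fun t => curve_angle (log_radius t)).
  assert (H0 : log_radius 0 = 0 /\ curve_angle 0 = 0)
    by (rewrite log_radius_nonpos_arg, curve_angle_nonneg_arg; lra).
  repeat split.
  - destruct H0 as [-> ->]. unfold Cexp, RtoC; simpl. rewrite exp_0, cos_0, sin_0. f_equal; ring.
  - intros t Ht. rewrite Cmod_Cexp. simpl. rewrite <- exp_0.
    apply exp_increasing, log_radius_spec, Ht.
  - intros t Ht. destruct (Rle_lt_dec t 0) as [Hle|Hpos].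
    + assert (t = 0) as -> by lra. destruct H0 as [-> ->].
      apply phi_Cexp_tip; [rewrite sin_0; lra| |exact clock_0_0].
      apply defect_circle. pose proof PI_RGT_0. lra.
    + destruct (log_radius_spec t Hpos) as [Hr Hrt].
      apply phi_Cexp_tip; [now apply exp_sin_lt_1|now apply curve_angle_spec|exact Hrt].
  - apply filterlim_within_curve_angle_log_radius.
  - rewrite (proj1 H0). apply (proj2 H0).
  - intros t Ht. rewrite Cmod_Cexp. apply Cexp_polar.
Qed.

Theorem proposition3p1 :
  (exists (gamma : R -> C) (Theta : R -> R), tip_trace gamma Theta) /\
  (forall (gamma : R -> C) (Theta : R -> R), tip_trace gamma Theta ->
     (forall s t, 0 <= s -> s < t -> Cmod (gamma t) < Cmod (gamma s)) /\
     is_lim (fun t => Cmod (gamma t)) p_infty 0 /\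
     (forall s t, 0 <= s -> s < t -> Theta s < Theta t) /\
     (forall t, 0 < t -> exists d, is_derive Theta t d /\ 0 < d) /\
     is_lim Theta p_infty p_infty).
Proof.
  split; [exact tip_trace_exists|]. intros gamma Theta Htip.
  assert (Hmod : forall t, 0 < t -> Cmod (gamma t) = exp (log_radius t))
    by (intros t Ht; now apply (tip_trace_polar gamma Theta Htip)).
  pose proof (tip_trace_angle gamma Theta Htip) as Hang.
  destruct Htip as [Hg0 [_ [_ [_ [HT0 _]]]]].
  repeat split.
  - intros s t Hs Hst. rewrite Hmod by lra. destruct Hs as [Hs|<-].
    + rewrite Hmod by lra. apply exp_increasing, log_radius_decreasing; lra.
    + rewrite Hg0, Cmod_1, <- exp_0. apply exp_increasing, log_radius_spec. lra.
  - apply (is_lim_ext_loc (fun t => exp (log_radius t))).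
    + exists 0. intros t Ht. symmetry. now apply Hmod.
    + eapply is_lim_comp; [apply is_lim_exp_m|apply is_lim_log_radius|now exists 0].
  - intros s t Hs Hst. rewrite (Hang t) by lra. destruct Hs as [Hs|<-].
    + rewrite (Hang s) by lra. apply curve_angle_decreasing; [|now apply log_radius_spec].
      now apply log_radius_decreasing.
    + rewrite HT0. now apply curve_angle_pos, log_radius_spec.
  - intros t Ht. exists (curve_angle_deriv (log_radius t) / curve_time_deriv (log_radius t)).
    split; [|now apply curve_angle_log_radius_speed_pos].
    apply (is_derive_ext_loc (fun u => curve_angle (log_radius u)));
      [|now apply is_derive_curve_angle_log_radius].
    exists (mkposreal t Ht). intros u Hu. change (Rabs (u - t) < t) in Hu.
    apply Rabs_def2 in Hu. symmetry. apply Hang. lra.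
  - apply (is_lim_ext_loc (fun t => curve_angle (log_radius t)));
      [|exact is_lim_curve_angle_log_radius].
    exists 0. intros t Ht. symmetry. now apply Hang.
Qed.
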